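(* Suppose $0\le\alpha_3\le\alpha_2\le\alpha_1\le\pi/4$, and define $\zeta_0=\cos\alpha_1\cos\alpha_2\cos\alpha_3-\mathrm{i}\sin\alpha_1\sin\alpha_2\sin\alpha_3$, $\zeta_1=\cos\alpha_1\sin\alpha_2\sin\alpha_3-\mathrm{i}\sin\alpha_1\cos\alpha_2\cos\alpha_3$, $\zeta_2=\sin\alpha_1\cos\alpha_2\sin\alpha_3-\mathrm{i}\cos\alpha_1\sin\alpha_2\cos\alpha_3$, $\zeta_3=\sin\alpha_1\sin\alpha_2\cos\alpha_3-\mathrm{i}\cos\alpha_1\cos\alpha_2\sin\alpha_3$. Then $|\zeta_0|>|\zeta_1|=|\zeta_2|=|\zeta_3|>0$ if and only if $0<\alpha_3=\alpha_2=\alpha_1<\pi/4$.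
   Context: The numbers $|\zeta_k|$ are the four Schmidt coefficients of the two-qubit unitary $U(\alpha_1,\alpha_2,\alpha_3)=\exp[-\mathrm{i}\sum_{k=1}^3\alpha_k\sigma_k\otimes\sigma_k]=\sum_{k=0}^3\zeta_k\sigma_k\otimes\sigma_k$ ($\sigma_0=I$, $\sigma_k$ Pauli matrices). *)

From Stdlib Require Import Reals.
From Coquelicot Require Import Coquelicot.
Open Scope R_scope.

Definition zeta0 (a1 a2 a3 : R) : C :=
  (cos a1 * cos a2 * cos a3, - (sin a1 * sin a2 * sin a3)).
Definition zeta1 (a1 a2 a3 : R) : C :=
  (cos a1 * sin a2 * sin a3, - (sin a1 * cos a2 * cos a3)).
Definition zeta2 (a1 a2 a3 : R) : C :=
  (sin a1 * cos a2 * sin a3, - (cos a1 * sin a2 * cos a3)).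
Definition zeta3 (a1 a2 a3 : R) : C :=
  (sin a1 * sin a2 * cos a3, - (cos a1 * cos a2 * sin a3)).

(** With [x_k = sin^2 a_k], the squared moduli [|zeta_k|^2] are multilinear
    polynomials in [x1, x2, x3] whose consecutive differences factor as
    [(1 - 2 x1) (1 - x2 - x3)], [(1 - 2 x3) (x1 - x2)] and [(1 - 2 x1) (x2 - x3)].
    On [0 <= x3 <= x2 <= x1 <= 1/2] the strict inequality forces [x1 < 1/2],
    which makes the other two factors [1 - 2 x_k] nonzero, so the equalities
    force [x1 = x2 = x3 = x]; then [|zeta_3|^2 = x (1 - x)] is positive iff
    [x > 0].  Since [sin^2] is strictly increasing on [[0, pi/2]], these
    conditions on the [x_k] are exactly the stated ones on the [a_k]. *)

From Stdlib Require Import Reals Lra Psatz.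
From Coquelicot Require Import Coquelicot.
Open Scope R_scope.

Definition schmidt0 (x1 x2 x3 : R) : R := x1 * x2 * x3 + (1 - x1) * (1 - x2) * (1 - x3).
Definition schmidt1 (x1 x2 x3 : R) : R := (1 - x1) * x2 * x3 + x1 * (1 - x2) * (1 - x3).
Definition schmidt2 (x1 x2 x3 : R) : R := x1 * (1 - x2) * x3 + (1 - x1) * x2 * (1 - x3).
Definition schmidt3 (x1 x2 x3 : R) : R := x1 * x2 * (1 - x3) + (1 - x1) * (1 - x2) * x3.

Section SchmidtPolynomials.

Variables x1 x2 x3 : R.

Lemma schmidt0_sub_schmidt1 :
  schmidt0 x1 x2 x3 - schmidt1 x1 x2 x3 = (1 - 2 * x1) * (1 - x2 - x3).
Proof. unfold schmidt0, schmidt1; ring. Qed.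

Lemma schmidt1_sub_schmidt2 :
  schmidt1 x1 x2 x3 - schmidt2 x1 x2 x3 = (1 - 2 * x3) * (x1 - x2).
Proof. unfold schmidt1, schmidt2; ring. Qed.

Lemma schmidt2_sub_schmidt3 :
  schmidt2 x1 x2 x3 - schmidt3 x1 x2 x3 = (1 - 2 * x1) * (x2 - x3).
Proof. unfold schmidt2, schmidt3; ring. Qed.

End SchmidtPolynomials.

Lemma schmidt3_diag (x : R) : schmidt3 x x x = x * (1 - x).
Proof. unfold schmidt3; ring. Qed.

Lemma schmidt_separated_iff (x1 x2 x3 : R) :
  0 <= x3 -> x3 <= x2 -> x2 <= x1 -> x1 <= 1 / 2 ->
  ((schmidt0 x1 x2 x3 > schmidt1 x1 x2 x3 /\
    schmidt1 x1 x2 x3 = schmidt2 x1 x2 x3 /\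
    schmidt2 x1 x2 x3 = schmidt3 x1 x2 x3 /\
    schmidt3 x1 x2 x3 > 0)
   <->
   (0 < x3 /\ x3 = x2 /\ x2 = x1 /\ x1 < 1 / 2)).
Proof.
  intros h3 h32 h21 h1.
  pose proof (schmidt0_sub_schmidt1 x1 x2 x3) as d01.
  pose proof (schmidt1_sub_schmidt2 x1 x2 x3) as d12.
  pose proof (schmidt2_sub_schmidt3 x1 x2 x3) as d23.
  split.
  - intros [gt01 [eq12 [eq23 pos3]]].
    assert (lt1 : x1 < 1 / 2) by nra.
    assert (e23 : x3 = x2).
    { destruct (Rmult_integral (1 - 2 * x1) (x2 - x3)); lra. }
    assert (e12 : x2 = x1).
    { destruct (Rmult_integral (1 - 2 * x3) (x1 - x2)); lra. }
    subst x2 x3.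
    rewrite schmidt3_diag in pos3.
    repeat split; nra.
  - intros [pos3 [e23 [e12 lt1]]].
    subst x2 x3.
    pose proof (schmidt3_diag x1).
    repeat split; nra.
Qed.

Lemma Cmod_zeta0_sqr (a1 a2 a3 : R) :
  Cmod (zeta0 a1 a2 a3) ^ 2 = schmidt0 (sin a1 ^ 2) (sin a2 ^ 2) (sin a3 ^ 2).
Proof.
  rewrite Cmod2_alt; cbn [Re Im fst snd zeta0]; unfold schmidt0.
  rewrite <- !Rsqr_pow2, <- Rsqr_neg, !Rsqr_mult, !cos2; unfold Rsqr; ring.
Qed.

Lemma Cmod_zeta1_sqr (a1 a2 a3 : R) :
  Cmod (zeta1 a1 a2 a3) ^ 2 = schmidt1 (sin a1 ^ 2) (sin a2 ^ 2) (sin a3 ^ 2).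
Proof.
  rewrite Cmod2_alt; cbn [Re Im fst snd zeta1]; unfold schmidt1.
  rewrite <- !Rsqr_pow2, <- Rsqr_neg, !Rsqr_mult, !cos2; unfold Rsqr; ring.
Qed.

Lemma Cmod_zeta2_sqr (a1 a2 a3 : R) :
  Cmod (zeta2 a1 a2 a3) ^ 2 = schmidt2 (sin a1 ^ 2) (sin a2 ^ 2) (sin a3 ^ 2).
Proof.
  rewrite Cmod2_alt; cbn [Re Im fst snd zeta2]; unfold schmidt2.
  rewrite <- !Rsqr_pow2, <- Rsqr_neg, !Rsqr_mult, !cos2; unfold Rsqr; ring.
Qed.

Lemma Cmod_zeta3_sqr (a1 a2 a3 : R) :
  Cmod (zeta3 a1 a2 a3) ^ 2 = schmidt3 (sin a1 ^ 2) (sin a2 ^ 2) (sin a3 ^ 2).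
Proof.
  rewrite Cmod2_alt; cbn [Re Im fst snd zeta3]; unfold schmidt3.
  rewrite <- !Rsqr_pow2, <- Rsqr_neg, !Rsqr_mult, !cos2; unfold Rsqr; ring.
Qed.

Lemma Rgt_pow2_iff (u v : R) : 0 <= u -> 0 <= v -> (u > v <-> u ^ 2 > v ^ 2).
Proof. intros hu hv; split; intro h; nra. Qed.

Lemma Req_pow2_iff (u v : R) : 0 <= u -> 0 <= v -> (u = v <-> u ^ 2 = v ^ 2).
Proof. intros hu hv; split; intro h; [subst; reflexivity | nra]. Qed.

Lemma pow2_gt_0_iff (u : R) : 0 <= u -> (u > 0 <-> u ^ 2 > 0).
Proof. intro hu; split; intro h; nra. Qed.

Lemma sin_pow2_le (a b : R) : 0 <= a -> a <= b -> b <= PI / 2 -> sin a ^ 2 <= sin b ^ 2.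
Proof.
  intros ha hab hb; pose proof PI_RGT_0.
  assert (sin a <= sin b) by (apply sin_incr_1; lra).
  assert (0 <= sin a) by (apply sin_ge_0; lra).
  nra.
Qed.

Lemma sin_pow2_lt (a b : R) : 0 <= a -> a < b -> b <= PI / 2 -> sin a ^ 2 < sin b ^ 2.
Proof.
  intros ha hab hb; pose proof PI_RGT_0.
  assert (sin a < sin b) by (apply sin_increasing_1; lra).
  assert (0 <= sin a) by (apply sin_ge_0; lra).
  nra.
Qed.

Lemma sin_pow2_lt_iff (a b : R) :
  0 <= a <= PI / 2 -> 0 <= b <= PI / 2 -> (a < b <-> sin a ^ 2 < sin b ^ 2).
Proof.
  intros ha hb; split; [intro; apply sin_pow2_lt; lra |].
  intro h; destruct (Rlt_or_le a b) as [lt | le]; [exact lt |].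
  pose proof (sin_pow2_le b a); lra.
Qed.

Lemma sin_pow2_eq_iff (a b : R) :
  0 <= a <= PI / 2 -> 0 <= b <= PI / 2 -> (a = b <-> sin a ^ 2 = sin b ^ 2).
Proof.
  intros ha hb; split; [intros ->; reflexivity |].
  intro h; destruct (Rtotal_order a b) as [lt | [eq | gt]]; [| exact eq |].
  - pose proof (sin_pow2_lt a b); lra.
  - pose proof (sin_pow2_lt b a); lra.
Qed.

Lemma sin_0_pow2 : sin 0 ^ 2 = 0.
Proof. rewrite sin_0; ring. Qed.

Lemma sin_PI4_pow2 : sin (PI / 4) ^ 2 = 1 / 2.
Proof.
  pose proof (sin2_cos2 (PI / 4)) as h; rewrite <- sin_cos_PI4 in h.
  unfold Rsqr in h; lra.
Qed.

Theorem lemma9 (a1 a2 a3 : R) :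
  0 <= a3 -> a3 <= a2 -> a2 <= a1 -> a1 <= PI / 4 ->
  ((Cmod (zeta0 a1 a2 a3) > Cmod (zeta1 a1 a2 a3) /\
    Cmod (zeta1 a1 a2 a3) = Cmod (zeta2 a1 a2 a3) /\
    Cmod (zeta2 a1 a2 a3) = Cmod (zeta3 a1 a2 a3) /\
    Cmod (zeta3 a1 a2 a3) > 0)
   <->
   (0 < a3 /\ a3 = a2 /\ a2 = a1 /\ a1 < PI / 4)).
Proof.
  intros h3 h32 h21 h1; pose proof PI_RGT_0.
  rewrite (Rgt_pow2_iff _ _ (Cmod_ge_0 _) (Cmod_ge_0 _)),
    !(Req_pow2_iff _ _ (Cmod_ge_0 _) (Cmod_ge_0 _)),
    (pow2_gt_0_iff _ (Cmod_ge_0 _)),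
    Cmod_zeta0_sqr, Cmod_zeta1_sqr, Cmod_zeta2_sqr, Cmod_zeta3_sqr.
  rewrite schmidt_separated_iff.
  - rewrite (sin_pow2_lt_iff 0 a3), (sin_pow2_eq_iff a3 a2), (sin_pow2_eq_iff a2 a1),
      (sin_pow2_lt_iff a1 (PI / 4)), sin_0_pow2, sin_PI4_pow2 by lra.
    reflexivity.
  - apply pow2_ge_0.
  - apply sin_pow2_le; lra.
  - apply sin_pow2_le; lra.
  - rewrite <- sin_PI4_pow2; apply sin_pow2_le; lra.
Qed.
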